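(* Let $\mathsf V$ be a variety, $h:\mathbf F_{\mathsf V}(z)\to\prod_{k=1}^m\mathbf E_k$ an algebraic e-generalization problem, and $g:\mathbf F_{\mathsf V}(z)\to\mathbf P$, $g':\mathbf F_{\mathsf V}(z)\to\mathbf P'$ solutions of $h$. Then: (1) if $g'\sqsubseteq g$, then $\ker(g)\subseteq\ker(g')$; (2) if $\ker(g)\subseteq\ker(g')$, then $g'\sqsubseteq n_{\ker(g)}$.
   Context: $\mathbf F_{\mathsf V}(z)$ is the free algebra of the variety $\mathsf V$ on one generator $z$. An algebra is projective in $\mathsf V$ iff it is a retract of a free algebra; exact if isomorphic to a finitely generated subalgebra of a finitely generated free algebra of $\mathsf V$. An algebraic e-generalization problem is a homomorphism $h:\mathbf F_{\mathsf V}(z)\to\prod_{k=1}^m\mathbf E_k$ with each $\mathbf E_k$ 1-generated exact and each $p_k\circ h$ surjective. A solution of $h$ is a homomorphism $g:\mathbf F_{\mathsf V}(z)\to\mathbf P$, $\mathbf P$ finitely generated projective, with $f\circ g=h$ for some homomorphism $f$. For homomorphisms $g:\mathbf A\to\mathbf B$, $g':\mathbf A\to\mathbf B'$, $g\sqsubseteq g'$ iff there is a homomorphism $f:\mathbf B'\to\mathbf B$ with $f\circ g'=g$. For a congruence $\theta$, $n_\theta:\mathbf F_{\mathsf V}(z)\to\mathbf F_{\mathsf V}(z)/\theta$ is the natural epimorphism. *)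

From mathcomp Require Import all_boot.
From Stdlib Require Import ClassicalEpsilon.
Set Implicit Arguments. Unset Strict Implicit. Unset Printing Implicit Defensive.

Record signature := Signature { op : Type; arity : op -> nat }.

Section UniversalAlgebra.
Variable S : signature.

Inductive term : Type :=
| tvar : nat -> term
| tapp : forall o : op S, ('I_(arity o) -> term) -> term.

Record algebra := Algebra {
  carrier :> Type;
  interp : forall o : op S, ('I_(arity o) -> carrier) -> carrier }.
Arguments interp : clear implicits.

Fixpoint eval (A : algebra) (v : nat -> A) (t : term) : A :=
  match t with
  | tvar n => v n
  | tapp o ts => interp _ o (fun i => eval v (ts i))
  end.

(* A variety is given by a set of identities (equational class Mod(Sigma)). *)
Definition identity := (term * term)%type.
Definition variety := identity -> Prop.
Definition in_variety (V : variety) (A : algebra) : Prop :=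
  forall e, V e -> forall v : nat -> A, eval v e.1 = eval v e.2.

Definition is_hom (A B : algebra) (f : A -> B) : Prop :=
  forall o (args : 'I_(arity o) -> A), f (interp _ o args) = interp _ o (fun i => f (args i)).

Definition generated_by (A : algebra) (X : Type) (x : X -> A) (y : A) : Prop :=
  forall P : A -> Prop, (forall i, P (x i)) ->
    (forall o (args : 'I_(arity o) -> A), (forall i, P (args i)) -> P (interp _ o args)) ->
    P y.

Definition finitely_generated (A : algebra) : Prop :=
  exists n (a : 'I_n -> A), forall y, generated_by a y.

Definition one_generated (A : algebra) : Prop :=
  exists a : A, forall y, generated_by (fun _ : unit => a) y.

Definition is_free (V : variety) (F : algebra) (X : Type) (x : X -> F) : Prop :=
  in_variety V F /\ (forall y, generated_by x y) /\
  forall A : algebra, in_variety V A -> forall a : X -> A,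
    (exists f : F -> A, is_hom f /\ forall i, f (x i) = a i) /\
    (forall f g : F -> A, is_hom f -> is_hom g -> (forall i, f (x i) = g (x i)) ->
       forall y, f y = g y).

(* exact: isomorphic to a finitely generated subalgebra of a finitely generated
   free algebra of V (the image of an injective homomorphism e : E -> F which is
   the subalgebra generated by finitely many elements b). *)
Definition is_exact (V : variety) (E : algebra) : Prop :=
  exists n (F : algebra) (x : 'I_n -> F), is_free V x /\
  exists m (b : 'I_m -> F) (e : E -> F), is_hom e /\ injective e /\
    forall y, (exists u, e u = y) <-> generated_by b y.

Definition is_projective (V : variety) (P : algebra) : Prop :=
  exists (X : Type) (F : algebra) (x : X -> F), is_free V x /\
  exists (i : P -> F) (r : F -> P), is_hom i /\ is_hom r /\ forall p, r (i p) = p.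

Definition prod_alg (I : Type) (E : I -> algebra) : algebra :=
  @Algebra (forall k, E k) (fun o args k => interp _ o (fun j => args j k)).

Definition is_egp (V : variety) (F : algebra) (z : F) (m : nat)
    (E : 'I_m -> algebra) (h : F -> prod_alg E) : Prop :=
  is_free V (fun _ : unit => z) /\ is_hom h /\
  (forall k, one_generated (E k) /\ is_exact V (E k)) /\
  (forall k, forall e : E k, exists x, h x k = e).

Definition is_solution (V : variety) (F : algebra) (m : nat)
    (E : 'I_m -> algebra) (h : F -> prod_alg E) (P : algebra) (g : F -> P) : Prop :=
  is_hom g /\ finitely_generated P /\ is_projective V P /\
  exists f : P -> prod_alg E, is_hom f /\ forall x, f (g x) = h x.

(* g [= g'  iff  f o g' = g for some homomorphism f : B' -> B *)
Definition less_general (A B B' : algebra) (g : A -> B) (g' : A -> B') : Prop :=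
  exists f : B' -> B, is_hom f /\ forall x, f (g' x) = g x.

Definition kernel (A B : algebra) (g : A -> B) : A -> A -> Prop :=
  fun x y => g x = g y.

Definition kernel_incl (A : Type) (r s : A -> A -> Prop) : Prop :=
  forall x y, r x y -> s x y.

(* Quotient algebra A/theta (classes as predicates; operations via chosen
   representatives, correct when theta is a congruence) *)
Section Quotient.
Variables (A : algebra) (th : A -> A -> Prop).

Definition qcarrier := {C : A -> Prop | exists x, C = th x}.
Definition qclass (x : A) : qcarrier := exist _ (th x) (ex_intro _ x erefl).
Definition qrep (c : qcarrier) : A :=
  proj1_sig (constructive_indefinite_description _ (proj2_sig c)).
Definition quot_alg : algebra :=
  @Algebra qcarrier (fun o args => qclass (interp _ o (fun i => qrep (args i)))).
Definition nat_epi : A -> quot_alg := qclass.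
End Quotient.

End UniversalAlgebra.

(** Both parts are the homomorphism theorem in disguise.  If [f \o g = g'] then
    [g x = g y] forces [g' x = g' y].  Conversely, if [ker g] is contained in
    [ker g'], then [g'] is constant on the classes of [ker g], so it induces the
    homomorphism [c |-> g' (qrep c)] on [F / ker g] with [g'] as its composite
    with the natural epimorphism.  None of the properties of an e-generalization
    problem or of its solutions is needed beyond [g'] being a homomorphism. *)
From mathcomp Require Import all_boot.
From Stdlib Require Import ClassicalEpsilon.

Set Implicit Arguments.
Unset Strict Implicit.
Unset Printing Implicit Defensive.

Section Factorization.
Variable S : signature.

Lemma less_general_kernel_incl (A B B' : algebra S) (g : A -> B) (g' : A -> B') :
  less_general g' g -> kernel_incl (kernel g) (kernel g').
Proof. by move=> [f [_ fgE]] x y gxy; rewrite /kernel -!fgE gxy. Qed.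

Variables (A : algebra S) (th : A -> A -> Prop).
Hypothesis th_refl : forall x, th x x.

Lemma qrep_qclass x : th x (qrep (qclass th x)).
Proof.
rewrite /qrep; case: constructive_indefinite_description => y /= thxy.
by rewrite thxy.
Qed.

Definition quot_lift (B : algebra S) (f : A -> B) (c : quot_alg th) : B :=
  f (qrep c).

Variables (B : algebra S) (f : A -> B).
Hypothesis th_sub_ker : kernel_incl th (kernel f).

Lemma quot_lift_nat_epi x : quot_lift f (nat_epi th x) = f x.
Proof. by symmetry; apply/th_sub_ker/qrep_qclass. Qed.

Lemma quot_lift_hom : is_hom f -> is_hom (quot_lift f).
Proof.
move=> f_hom o args.
by rewrite [LHS]quot_lift_nat_epi f_hom.
Qed.

Lemma less_general_nat_epi : is_hom f -> less_general f (nat_epi th).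
Proof.
move=> f_hom; exists (quot_lift f); split; first exact: quot_lift_hom.
exact: quot_lift_nat_epi.
Qed.

End Factorization.

Theorem proposition4p16 (S : signature) (V : variety S) (F : algebra S) (z : F)
  (m : nat) (E : 'I_m -> algebra S) (h : F -> prod_alg E)
  (P P' : algebra S) (g : F -> P) (g' : F -> P') :
  is_egp V z h -> is_solution V h g -> is_solution V h g' ->
  (less_general g' g -> kernel_incl (kernel g) (kernel g')) /\
  (kernel_incl (kernel g) (kernel g') -> less_general g' (nat_epi (kernel g))).
Proof.
move=> _ _ [g'_hom _]; split; first exact: less_general_kernel_incl.
by move=> ker_incl; apply: less_general_nat_epi.
Qed.
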